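(* Let $n\ge1$ and $1\le k\le n$ be integers. Then $$|\mathrm{SVT}((1^k),n)|=\binom{n}{k}\,{}_2F_1\!\left(\begin{matrix}k,\;k-n\\ k+1\end{matrix};-1\right).$$
   Context: Let $[n]=\{1,\dots,n\}$. For a partition $\lambda$ with at most $n$ nonzero parts, identified with its Young diagram $\{(i,j): 1\le j\le\lambda_i\}$ (row index $i$ increasing downward, column index $j$ to the right), a set-valued tableau of shape $\lambda$ with entries in $[n]$ assigns to every box $(i,j)$ a nonempty subset $T_{i,j}\subseteq[n]$ such that $\max T_{i,j}\le\min T_{i,j+1}$ and $\max T_{i,j}<\min T_{i+1,j}$ whenever these boxes exist; $\mathrm{SVT}(\lambda,n)$ is the set of these tableaux, and $(1^k)$ is the one-column partition with $k$ boxes. $(a)_0=1$, $(a)_m=a(a+1)\cdots(a+m-1)$, and ${}_2F_1\!\left(\begin{smallmatrix}a,\,b\\ c\end{smallmatrix};z\right)=\sum_{m\ge0}\frac{(a)_m(b)_m}{(c)_m}\frac{z^m}{m!}$, a finite sum when $b$ is a nonpositive integer. *)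

From mathcomp Require Import all_boot all_order all_algebra.
Set Implicit Arguments. Unset Strict Implicit. Unset Printing Implicit Defensive.
Import Order.TTheory GRing.Theory Num.Theory.

(* Boxes are 0-indexed: box (i,j) of the paper is (i-1, j-1) here.
   The entry alphabet [n] = {1..n} is represented by 'I_n (value v <-> v+1),
   an order-preserving relabelling. *)

Definition maxpart (la : seq nat) : nat := foldr maxn 0 la.

Definition in_diagram (la : seq nat) (i j : nat) : bool :=
  (i < size la) && (j < nth 0 la i).

Definition is_svt (la : seq nat) (n : nat)
  (T : {ffun 'I_(size la) * 'I_(maxpart la) -> {set 'I_n}}) : bool :=
  [forall b : 'I_(size la) * 'I_(maxpart la), if in_diagram la (b.1 : nat) (b.2 : nat) then T b != set0 else T b == set0] &&
  [forall b1 : 'I_(size la) * 'I_(maxpart la), forall b2 : 'I_(size la) * 'I_(maxpart la),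
     [&& in_diagram la b1.1 b1.2, in_diagram la b2.1 b2.2,
         (b1.1 : nat) == b2.1 & (b2.2 : nat) == (b1.2).+1] ==>
     [forall x in T b1, forall y in T b2, x <= y]] &&
  [forall b1 : 'I_(size la) * 'I_(maxpart la), forall b2 : 'I_(size la) * 'I_(maxpart la),
     [&& in_diagram la b1.1 b1.2, in_diagram la b2.1 b2.2,
         (b1.2 : nat) == b2.2 & (b2.1 : nat) == (b1.1).+1] ==>
     [forall x in T b1, forall y in T b2, x < y]].

Definition SVT (la : seq nat) (n : nat) :
  {set {ffun 'I_(size la) * 'I_(maxpart la) -> {set 'I_n}}} :=
  [set T | is_svt T].

Definition one_col (k : nat) : seq nat := nseq k 1%N.

Local Open Scope ring_scope.

Definition poch (a : rat) (m : nat) : rat := \prod_(i < m) (a + i%:R).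

(* 2F1(a, -N; c; z): the series sum_{m>=0} (a)_m (b)_m / (c)_m z^m / m! with
   b = -N a nonpositive integer; all terms with m > N vanish since (-N)_m = 0,
   so the sum is the finite sum over m = 0..N. *)
Definition hyp2F1_negb (a : rat) (N : nat) (c z : rat) : rat :=
  \sum_(m < N.+1) poch a m * poch (- N%:R) m / poch c m * z ^+ m / (m`!)%:R.

(* Record, for each entry x in [n] of a set-valued tableau of shape (1^k), the
   row of the box containing x, or 0 if x is unused.  The strict column condition
   makes this a bijection onto the words of length n over {0..k} whose nonzero
   letters weakly increase and take every value in {1..k}.  Appending a letter
   to such words gives c(n+1,k) = 2 c(n,k) + c(n,k-1), which is solved by
   c(n,k) = sum_m C(n,m) C(m-1,k-1): choose the m used entries, then a
   composition of m into k parts.  Since (k)_j/(k+1)_j = k/(k+j) and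
   (k-n)_j (-1)^j = j! C(n-k,j), the j-th hypergeometric term times C(n,k) is
   C(n,k) C(n-k,j) k/(k+j) = C(n,k+j) C(k+j-1,k-1). *)

From mathcomp Require Import all_boot all_order all_algebra.
From mathcomp Require Import ring zify.
Set Implicit Arguments. Unset Strict Implicit. Unset Printing Implicit Defensive.
Import Order.TTheory GRing.Theory Num.Theory.

Definition blank_or_le (a b : nat) : bool := [|| a == 0, b == 0 | a <= b].

Definition column_word (k : nat) (w : seq nat) : bool :=
  [&& all (leq^~ k) w, pairwise blank_or_le w & all (fun c => c \in w) (iota 1 k)].

Fixpoint words (K n : nat) : seq (seq nat) :=
  if n is n'.+1 then [seq rcons w x | w <- words K n', x <- iota 0 K.+1]
  else [:: [::]].

Lemma wordsS K n : words K n.+1 = [seq rcons w x | w <- words K n, x <- iota 0 K.+1].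
Proof. by []. Qed.

Lemma mem_words K n w : (w \in words K n) = (size w == n) && all (leq^~ K) w.
Proof.
elim: n w => [|n IHn] w; first by rewrite inE; case: w.
rewrite wordsS; apply/allpairsP/idP => [[[w' x] [w'_in x_in ->]] | ].
  move: w'_in x_in; rewrite IHn mem_iota => /andP[/eqP <- w'K] xK.
  by rewrite size_rcons eqxx all_rcons w'K andbT.
case/lastP: w => [//|w x]; rewrite size_rcons all_rcons eqSS => /and3P[sw xK wK].
by exists (w, x); rewrite IHn sw wK mem_iota.
Qed.

Lemma uniq_words K n : uniq (words K n).
Proof.
elim: n => [//|n IHn]; rewrite wordsS; apply: allpairs_uniq => //; first exact: iota_uniq.
by move=> [? ?] [? ?] _ _ /rcons_inj.
Qed.

Lemma column_word_rcons0 k w : column_word k (rcons w 0) = column_word k w.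
Proof.
rewrite /column_word all_rcons pairwise_rcons /=.
have -> : all (blank_or_le^~ 0) w by apply/allP => x _; rewrite /blank_or_le eqxx orbT.
congr [&& _, _ & _]; apply: eq_in_all => c; rewrite mem_iota mem_rcons inE.
by case: c.
Qed.

Lemma all_mem_iota_top (w : seq nat) k : 0 < k ->
  all (fun c => c \in w) (iota 1 k) = all (fun c => c \in w) (iota 1 k.-1) && (k \in w).
Proof.
by case: k => // k _; rewrite -pred_Sn -(addn1 k) iotaD all_cat /= andbT add1n addn1.
Qed.

Lemma all_mem_iota_rcons_top k (w : seq nat) : 0 < k ->
  all (fun c => c \in rcons w k) (iota 1 k) = all (fun c => c \in w) (iota 1 k.-1).
Proof.
move=> k_gt0; rewrite all_mem_iota_top // mem_rcons mem_head andbT.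
apply: eq_in_all => c; rewrite mem_iota mem_rcons inE add1n => /andP[_ ck].
by rewrite prednK in ck; rewrite ?(ltn_eqF ck).
Qed.

Lemma all_leq_pred k w : 0 < k ->
  all (leq^~ k.-1) w = all (leq^~ k) w && (k \notin w).
Proof.
move=> k_gt0; rewrite -has_pred1 -all_predC -all_predI; apply: eq_all => a /=.
by rewrite -ltnS (prednK k_gt0) ltn_neqAle andbC.
Qed.

Lemma column_word_rcons_top k w : 0 < k ->
  column_word k (rcons w k) = column_word k w || column_word k.-1 w.
Proof.
move=> k_gt0; rewrite /column_word all_rcons pairwise_rcons.
rewrite all_mem_iota_rcons_top // (all_mem_iota_top w k_gt0) all_leq_pred // leqnn.
case wk: (all (leq^~ k) w) => //=.
have -> : all (blank_or_le^~ k) w.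
  by apply: sub_all wk => a ak; rewrite /blank_or_le ak !orbT.
by case: (pairwise _ _); case: (all _ _); case: (k \in w).
Qed.

Lemma column_word_rcons_nz k w x : x != 0 -> column_word k (rcons w x) -> x = k.
Proof.
move=> x_nz /and3P[]; rewrite all_rcons pairwise_rcons => /andP[xk _] /andP[bol _] cov.
have k_gt0 : 0 < k by apply: leq_trans xk; rewrite lt0n.
move: cov; rewrite all_mem_iota_top // mem_rcons inE => /andP[_ /orP[/eqP //|kw]].
move/allP: bol => /(_ k kw); rewrite /blank_or_le (negbTE x_nz) (gtn_eqF k_gt0) /=.
by move=> kx; apply/eqP; rewrite eqn_leq xk.
Qed.

Lemma column_word_predF k w : 0 < k -> column_word k w -> column_word k.-1 w = false.
Proof.
move=> k_gt0 /and3P[_ _]; rewrite all_mem_iota_top // => /andP[_ kw].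
by rewrite /column_word all_leq_pred // kw andbF.
Qed.

Lemma count_column_word_rcons K k w : k <= K ->
  count (fun x => column_word k (rcons w x)) (iota 0 K.+1) =
  column_word k w + (if 0 < k then column_word k w + column_word k.-1 w else 0).
Proof.
move=> kK; rewrite -[iota 0 K.+1]/(0 :: iota 1 K) /= column_word_rcons0; congr (_ + _).
have top_only x : x \in iota 1 K ->
    column_word k (rcons w x) = (x == k) && column_word k (rcons w k).
  rewrite mem_iota => /andP[x_gt0 _]; case: eqP => [-> //|xk].
  by apply/negP => /(column_word_rcons_nz (lt0n_neq0 x_gt0)).
rewrite (eq_in_count top_only); case: (posnP k) => [-> | k_gt0].
  by rewrite (@eq_in_count _ _ pred0) ?count_pred0 // => x; rewrite mem_iota => /andP[/gtn_eqF ->].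
have -> : count (fun x => (x == k) && column_word k (rcons w k)) (iota 1 K) =
    column_word k (rcons w k).
  case: (column_word _ _); last first.
    by rewrite (eq_count (a2 := pred0)) ?count_pred0 // => x; rewrite andbF.
  rewrite (eq_count (a2 := pred1 k)) => [|x]; last by rewrite andbT.
  by rewrite count_uniq_mem ?iota_uniq // mem_iota k_gt0 add1n ltnS kK.
rewrite column_word_rcons_top //.
by case cw: (column_word k w); rewrite ?(column_word_predF k_gt0 cw).
Qed.

Definition ncolumn_words K k n := count (column_word k) (words K n).

Lemma ncolumn_wordsS K k n : k <= K ->
  ncolumn_words K k n.+1 = ncolumn_words K k n +
    (if 0 < k then ncolumn_words K k n + ncolumn_words K k.-1 n else 0).
Proof.
move=> kK; rewrite /ncolumn_words wordsS; elim: (words K n) => [|w s IHs].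
  by case: ifP.
rewrite allpairs_cons count_cat count_map IHs.
rewrite (eq_count (a2 := fun x => column_word k (rcons w x))) // count_column_word_rcons //=.
by case: ifP => _; lia.
Qed.

Fixpoint ncompositions (m k : nat) : nat :=
  match m, k with
  | 0, k => k == 0
  | m'.+1, 0 => 0
  | m'.+1, k'.+1 => ncompositions m' k'.+1 + ncompositions m' k'
  end.

Lemma ncompositionsS m k :
  ncompositions m.+1 k.+1 = ncompositions m k.+1 + ncompositions m k.
Proof. by []. Qed.

Lemma ncompositionsSS m k : ncompositions m.+1 k.+1 = 'C(m, k).
Proof.
elim: m k => [|m IHm] [|k] //.
  by rewrite ncompositionsS IHm !bin0.
by rewrite ncompositionsS !IHm binS.
Qed.

Lemma ncompositions_small m k : m < k -> ncompositions m k = 0.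
Proof.
case: m k => [|m] [|k] //; rewrite ltnS => mk.
by rewrite ncompositionsSS bin_small.
Qed.

(* The bound M is left free so that the Pascal recursion below needs no boundary terms. *)
Definition binomial_comp_sum (M n k : nat) := \sum_(m < M) 'C(n, m) * ncompositions m k.

Lemma binomial_comp_sum_widen M n k : n < M ->
  binomial_comp_sum M.+1 n k = binomial_comp_sum M n k.
Proof. by move=> nM; rewrite /binomial_comp_sum big_ord_recr /= bin_small // addn0. Qed.

Lemma binomial_comp_sum0 M n : binomial_comp_sum M.+1 n 0 = 1.
Proof.
rewrite /binomial_comp_sum big_ord_recl /= bin0 big1 // => i _.
by rewrite muln0.
Qed.

Lemma binomial_comp_sumSS M n k :
  binomial_comp_sum M.+1 n.+1 k.+1 =
    binomial_comp_sum M.+1 n k.+1 + binomial_comp_sum M n k.+1 + binomial_comp_sum M n k.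
Proof.
rewrite /binomial_comp_sum !big_ord_recl /= !muln0 !add0n -!big_split /=.
by apply: eq_bigr => i _; rewrite /bump /= binS; ring.
Qed.

Lemma ncolumn_words_sum K k n : k <= K -> ncolumn_words K k n = binomial_comp_sum n.+1 n k.
Proof.
elim: n k => [|n IHn] [|k] kK.
- by rewrite /ncolumn_words /= binomial_comp_sum0.
- by rewrite /ncolumn_words /binomial_comp_sum /= big_ord_recl big_ord0.
- by rewrite ncolumn_wordsS //= addn0 IHn // !binomial_comp_sum0.
rewrite ncolumn_wordsS //= binomial_comp_sumSS binomial_comp_sum_widen // !IHn //.
  by rewrite addnA.
exact: ltnW.
Qed.

Lemma size_one_col k : size (one_col k) = k.
Proof. exact: size_nseq. Qed.

Lemma maxpart_one_col k : 0 < k -> maxpart (one_col k) = 1.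
Proof. by case: k => // k _; elim: k => // k IHk; rewrite /maxpart /= in IHk *; rewrite IHk. Qed.

Section OneColumn.

Variables (k n : nat).
Hypothesis k_gt0 : 0 < k.

Definition col_box := ('I_(size (one_col k)) * 'I_(maxpart (one_col k)))%type.

Implicit Types (b : col_box) (T : {ffun col_box -> {set 'I_n}}).

Definition box_of_row i (ik : i < k) : col_box :=
  (Ordinal (leq_trans ik (eq_leq (esym (size_one_col k)))),
   Ordinal (eq_leq (esym (maxpart_one_col k_gt0)))).

Lemma col_box_col b : val b.2 = 0.
Proof. by case: b => [? [j /=]]; rewrite maxpart_one_col //; case: j. Qed.

Lemma col_box_row b : val b.1 < k.
Proof. exact: leq_trans (ltn_ord b.1) (eq_leq (size_one_col k)). Qed.

Lemma col_box_inj b1 b2 : val b1.1 = val b2.1 -> b1 = b2.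
Proof.
move: (col_box_col b1) (col_box_col b2).
case: b1 b2 => [i1 j1] [i2 j2] /= j1_0 j2_0 i12.
by congr pair; apply: val_inj; rewrite /= ?j1_0 ?j2_0.
Qed.

Lemma in_diagram_one_col b : in_diagram (one_col k) b.1 b.2.
Proof. by rewrite /in_diagram ltn_ord nth_nseq col_box_row col_box_col. Qed.

Definition svt_label T (x : 'I_n) : nat :=
  if [pick b | x \in T b] is Some b then (val b.1).+1 else 0.

Definition svt_word T : seq nat := map (svt_label T) (enum 'I_n).

Definition word_svt (w : seq nat) : {ffun col_box -> {set 'I_n}} :=
  [ffun b => [set x : 'I_n | nth 0 w x == (val b.1).+1]].

Lemma svt_label_le T x : svt_label T x <= k.
Proof. by rewrite /svt_label; case: pickP => // b _; apply: col_box_row. Qed.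

Lemma svt_word_in_words T : svt_word T \in words k n.
Proof.
rewrite mem_words size_map size_enum_ord eqxx /=.
by apply/allP => c /mapP[x _ ->]; apply: svt_label_le.
Qed.

Section SetValuedColumn.

Variable T : {ffun col_box -> {set 'I_n}}.
Hypothesis T_svt : is_svt T.

Lemma svt_nonempty b : T b != set0.
Proof.
by case/andP: T_svt => /andP[/forallP /(_ b)]; rewrite in_diagram_one_col.
Qed.

Lemma svt_lt_next b1 b2 x y :
  val b2.1 = (val b1.1).+1 -> x \in T b1 -> y \in T b2 -> x < y.
Proof.
case/andP: T_svt => _ /forallP /(_ b1) /forallP /(_ b2) below b12 x_in y_in.
move: below; rewrite !in_diagram_one_col !col_box_col b12 !eqxx /=.
by move=> /forallP /(_ x) /implyP /(_ x_in) /forallP /(_ y) /implyP /(_ y_in).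
Qed.

Lemma svt_lt b1 b2 x y : val b1.1 < val b2.1 -> x \in T b1 -> y \in T b2 -> x < y.
Proof.
move=> lt12; have [d b12] : exists d, val b2.1 = val b1.1 + d.+1.
  by exists (val b2.1 - (val b1.1).+1); lia.
elim: d b1 x b12 {lt12} => [|d IHd] b1 x b12 x_in y_in.
  by apply: svt_lt_next x_in y_in; rewrite b12 addn1.
have next_row : (val b1.1).+1 < k by have := col_box_row b2; rewrite b12; lia.
have /set0Pn [z z_in] := svt_nonempty (box_of_row next_row).
apply: ltn_trans (svt_lt_next _ x_in z_in) (IHd _ _ _ z_in y_in) => //.
by rewrite b12 addSnnS.
Qed.

Lemma svt_box_uniq b1 b2 x : x \in T b1 -> x \in T b2 -> b1 = b2.
Proof.
move=> x1 x2; case: (ltngtP (val b1.1) (val b2.1)) => [lt12|lt21|]; last exact: col_box_inj.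
- by have := svt_lt lt12 x1 x2; rewrite ltnn.
- by have := svt_lt lt21 x2 x1; rewrite ltnn.
Qed.


Lemma svt_labelP b x : (x \in T b) = (svt_label T x == (val b.1).+1).
Proof.
rewrite /svt_label; case: pickP => [b' x_in' | /(_ b) -> //].
rewrite eqSS; apply/idP/eqP => [x_in | /col_box_inj <- //].
by rewrite (svt_box_uniq x_in' x_in).
Qed.

Lemma svt_label_blank_or_le (x y : 'I_n) :
  x < y -> blank_or_le (svt_label T x) (svt_label T y).
Proof.
move=> xy; rewrite /blank_or_le /svt_label.
case: pickP => [b1 x_in|_]; last by [].
case: pickP => [b2 y_in|_]; last by rewrite orbT.
rewrite /= ltnS leqNgt; apply/negP => b21.
by have := svt_lt b21 y_in x_in; rewrite ltnNge ltnW.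
Qed.

Lemma column_word_svt_word : column_word k (svt_word T).
Proof.
apply/and3P; split.
- by apply/allP => c /mapP[x _ ->]; apply: svt_label_le.
- rewrite /svt_word pairwise_map; apply: sub_pairwise svt_label_blank_or_le _.
  rewrite -(pairwise_map val ltn) val_enum_ord -sorted_pairwise; last exact: ltn_trans.
  exact: iota_ltn_sorted.
- apply/allP => c; rewrite mem_iota add1n ltnS; case: c => // c /= ck.
  have /set0Pn [z] := svt_nonempty (box_of_row ck).
  by rewrite svt_labelP => /eqP z_label; apply/mapP; exists z; rewrite ?mem_enum ?z_label.
Qed.

End SetValuedColumn.

Lemma svt_word_inj T1 T2 : is_svt T1 -> is_svt T2 -> svt_word T1 = svt_word T2 -> T1 = T2.
Proof.
move=> svt1 svt2 /eq_in_map same_label; apply/ffunP => b; apply/setP => x.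
by rewrite (svt_labelP svt1) (svt_labelP svt2) same_label ?mem_enum.
Qed.

Section WordToTableau.

Variable w : seq nat.
Hypotheses (w_in : w \in words k n) (w_col : column_word k w).

Lemma is_svt_word_svt : is_svt (word_svt w).
Proof.
move: w_in w_col; rewrite mem_words => /andP[/eqP size_w _] /and3P[_ w_sorted w_cover].
apply/andP; split; first (apply/andP; split).
- apply/forallP => b; rewrite in_diagram_one_col; apply/set0Pn.
  have b_in : (val b.1).+1 \in w.
    by move/allP: w_cover; apply; rewrite mem_iota add1n !ltnS col_box_row.
  have idx_lt : index (val b.1).+1 w < n by rewrite -size_w index_mem.
  by exists (Ordinal idx_lt); rewrite ffunE inE nth_index.
- apply/forallP => b1; apply/forallP => b2; apply/implyP => /and4P[_ _ _].
  by rewrite !col_box_col.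
apply/forallP => b1; apply/forallP => b2; apply/implyP => /and4P[_ _ _ /eqP b12].
apply/forallP => x; apply/implyP; rewrite ffunE inE => /eqP wx.
apply/forallP => y; apply/implyP; rewrite ffunE inE => /eqP wy.
move: wy; rewrite /= b12 => wy.
case: (ltngtP x y) => // [yx | /val_inj xy]; last by move: wy; rewrite -xy wx => /succn_inj/n_Sn.
move/(pairwiseP 0): w_sorted => /(_ y x); rewrite !inE size_w !ltn_ord => /(_ isT isT yx).
by rewrite /blank_or_le wx wy /= ltnn.
Qed.

Lemma svt_word_svt : svt_word (word_svt w) = w.
Proof.
move: w_in; rewrite mem_words => /andP[/eqP size_w w_le].
apply: (@eq_from_nth _ 0); first by rewrite size_map size_enum_ord size_w.
move=> i; rewrite size_map size_enum_ord => lt_in.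
rewrite (nth_map (Ordinal lt_in)) ?size_enum_ord // /svt_label.
case: pickP => [b | no_box]; first by rewrite ffunE inE /= nth_enum_ord // => /eqP ->.
case w_i : (nth 0 w i) => [//|c].
have w_i_in : nth 0 w i \in w by rewrite mem_nth ?size_w.
have ck : c < k by move: (allP w_le _ w_i_in); rewrite w_i.
by have := no_box (box_of_row ck); rewrite ffunE inE /= nth_enum_ord // w_i eqxx.
Qed.

End WordToTableau.

Lemma card_SVT_one_col : #|SVT (one_col k) n| = ncolumn_words k k n.
Proof.
rewrite /ncolumn_words -size_filter cardE -(size_map svt_word); apply/perm_size/uniq_perm.
- rewrite map_inj_in_uniq ?enum_uniq // => T1 T2.
  by rewrite !mem_enum !inE; apply: svt_word_inj.
- exact/filter_uniq/uniq_words.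
move=> w; rewrite mem_filter; apply/mapP/andP => [[T] | [w_col w_in]].
  by rewrite mem_enum inE => T_svt ->; rewrite column_word_svt_word ?svt_word_in_words.
by exists (word_svt w); rewrite ?mem_enum ?inE ?is_svt_word_svt ?svt_word_svt.
Qed.

End OneColumn.

Lemma binomial_comp_sumE n k : k <= n ->
  binomial_comp_sum n.+1 n k.+1 = \sum_(j < n - k) 'C(n, j + k.+1) * 'C(j + k, k).
Proof.
move=> k_le_n; rewrite /binomial_comp_sum.
rewrite -(big_mkord xpredT (fun m => 'C(n, m) * ncompositions m k.+1)).
rewrite (big_cat_nat (n := k.+1)) //= big_nat_cond big1 ?add0n; last first.
  by move=> m /andP[/andP[_ m_lt] _]; rewrite ncompositions_small ?muln0.
rewrite -{1}(add0n k.+1) big_addn subSS big_mkord.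
by apply: eq_bigr => j _; rewrite addnS ncompositionsSS.
Qed.

Lemma bin_mul_bin_sub n k j : 'C(n, k) * 'C(n - k, j) = 'C(n, j + k) * 'C(j + k, k).
Proof.
have [jk_le_n | n_lt_jk] := leqP (j + k) n; last first.
  rewrite (bin_small n_lt_jk) mul0n; have [n_lt_k | k_le_n] := ltnP n k; first by rewrite bin_small.
  by rewrite (@bin_small (n - k)) ?muln0 //; lia.
have k_le_n : k <= n by apply: leq_trans jk_le_n; apply: leq_addl.
have j_le_nk : j <= n - k by rewrite leq_subRL // addnC.
apply/eqP; rewrite -(@eqn_pmul2r (k`! * (j`! * (n - k - j)`!))) ?muln_gt0 ?fact_gt0 //.
apply/eqP; transitivity n`!.
  by rewrite -(bin_fact k_le_n) -(bin_fact j_le_nk); ring.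
rewrite -(bin_fact jk_le_n) -(bin_fact (leq_addl j k)) addnK addnC subnDA; ring.
Qed.

Lemma bin_mul_bin_subS n k j :
  'C(n, k.+1) * 'C(n - k.+1, j) * k.+1 = 'C(n, j + k.+1) * 'C(j + k, k) * (j + k.+1).
Proof.
rewrite bin_mul_bin_sub -!mulnA; congr (_ * _).
by rewrite [LHS]mulnC -mul_bin_diag addnS mulnC.
Qed.

Local Open Scope ring_scope.

Lemma pochS a j : poch a j.+1 = poch a j * (a + j%:R).
Proof. by rewrite /poch big_ord_recr. Qed.

Lemma poch_gt0 a j : 0 < a -> 0 < poch a j.
Proof.
move=> a_gt0; elim: j => [|j IHj]; first by rewrite /poch big_ord0.
by rewrite pochS mulr_gt0 // ltr_wpDr.
Qed.

Lemma poch_nat_shift (k j : nat) : poch k%:R j * (k + j)%:R = k%:R * poch (k + 1)%:R j.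
Proof.
elim: j => [|j IHj]; first by rewrite /poch !big_ord0 addn0 mulr1 mul1r.
rewrite !pochS mulrA -IHj -!mulrA -!natrD; congr (_ * (_ * _%:R)); lia.
Qed.

Lemma poch_opp_nat (N j : nat) : poch (- N%:R) j * (-1) ^+ j = (j`!)%:R * ('C(N, j))%:R.
Proof.
elim: j => [|j IHj]; first by rewrite /poch big_ord0 mulr1 bin0 mul1r.
have -> : poch (- N%:R) j.+1 * (-1) ^+ j.+1 = poch (- N%:R) j * (-1) ^+ j * (N%:R - j%:R).
  by rewrite pochS exprS; ring.
rewrite IHj factS natrM; have [j_le_N | N_lt_j] := leqP j N; last first.
  by rewrite (bin_small N_lt_j) (bin_small (leqW N_lt_j)) !(mulr0, mul0r).
by rewrite -natrB // -mulrA -!natrM [in RHS]mulnAC mul_bin_left; congr _%:R; ring.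
Qed.

Lemma hyp2F1_negb_term (k N j : nat) : (0 < k)%N ->
  poch k%:R j * poch (- N%:R) j / poch (k + 1)%:R j * (-1) ^+ j / (j`!)%:R =
    k%:R * 'C(N, j)%:R / (k + j)%:R.
Proof.
move=> k_gt0.
have P_neq0 : poch (k + 1)%:R j != 0 by rewrite gt_eqF // poch_gt0 // ltr0n addn1.
have kj_neq0 : (k + j)%:R != 0 :> rat by rewrite pnatr_eq0 addn_eq0 negb_and -lt0n k_gt0.
have fact_neq0 : (j`!)%:R != 0 :> rat by rewrite pnatr_eq0 -lt0n fact_gt0.
have sign_sqr : (-1) ^+ j * (-1) ^+ j = 1 :> rat by rewrite -exprMn mulrNN mulr1 expr1n.
have -> : poch k%:R j = k%:R * poch (k + 1)%:R j / (k + j)%:R by rewrite -poch_nat_shift mulfK.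
have -> : poch (- N%:R) j = (j`!)%:R * 'C(N, j)%:R * (-1) ^+ j.
  by rewrite -poch_opp_nat -mulrA sign_sqr mulr1.
transitivity (k%:R * 'C(N, j)%:R / (k + j)%:R * ((-1) ^+ j * (-1) ^+ j) : rat).
  by field; rewrite -natrD kj_neq0 fact_neq0 P_neq0.
by rewrite sign_sqr mulr1.
Qed.

Lemma binomial_comp_sum_hyp2F1 n k : (0 < k)%N -> (k <= n)%N ->
  (binomial_comp_sum n.+1 n k)%:R = 'C(n, k)%:R * hyp2F1_negb k%:R (n - k) (k + 1)%:R (-1).
Proof.
case: k => // k _ k_lt_n; rewrite binomial_comp_sumE 1?ltnW // natr_sum.
rewrite /hyp2F1_negb subnSK // mulr_sumr; apply: eq_bigr => j _.
have kj_neq0 : (k.+1 + j)%:R != 0 :> rat by rewrite pnatr_eq0 addSn.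
rewrite hyp2F1_negb_term // !mulrA -!natrM; apply: (canRL (mulfK kj_neq0)).
by rewrite -natrM [(k.+1 + j)%N]addnC -bin_mul_bin_subS mulnAC.
Qed.

Theorem corollary3p4 (n k : nat) :
  (1 <= n)%N -> (1 <= k)%N -> (k <= n)%N ->
  (#|SVT (one_col k) n|%:R : rat) =
    ('C(n, k))%:R * hyp2F1_negb k%:R (n - k) (k + 1)%:R (-1).
Proof.
move=> _ k_gt0 k_le_n.
by rewrite card_SVT_one_col // ncolumn_words_sum // binomial_comp_sum_hyp2F1.
Qed.
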